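(* Let $P$ be a subsemigroup of a group $Q$ and let $(X,P,T)$ be a directed semigroup action. Then $G(X,P,T)=\{(x,q,y)\in X\times Q\times X:\exists m,n\in P,\ q=mn^{-1},\ x\in U(m),\ y\in U(n),\ x\cdot m=y\cdot n\}$ is a subgroupoid of $X\times Q\times X$, the latter equipped with its natural groupoid structure over $X$: $(x,q,y)(y,q',z)=(x,qq',z)$ and $(x,q,y)^{-1}=(y,q^{-1},x)$.
   Context: $P\subset Q$, $PP\subset P$, $e\in P$. A right (partial) action of $P$ on a set $X$ is a subset $X*P\subset X\times P$ and a map $(x,m)\mapsto x\cdot m$ on $X*P$ such that $(x,e)\in X*P$ with $x\cdot e=x$ for all $x$, and for all $x,m,n$: $(x,mn)\in X*P$ iff $(x,m)\in X*P$ and $(x\cdot m,n)\in X*P$, in which case $(x\cdot m)\cdot n=x\cdot(mn)$. $U(m)=\{x:(x,m)\in X*P\}$. $m\le n$ iff $n=mp$ for some $p\in P$. The action is directed if for all $m,n\in P$ with $U(m)\cap U(n)\neq\emptyset$ there is $r\in P$ with $m\le r$, $n\le r$ and $U(m)\cap U(n)=U(r)$. *)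

Set Implicit Arguments.
Unset Strict Implicit.

Definition is_group (Q : Type) (mul : Q -> Q -> Q) (inv : Q -> Q) (e : Q) : Prop :=
  (forall a b c, mul a (mul b c) = mul (mul a b) c) /\
  (forall a, mul e a = a) /\ (forall a, mul a e = a) /\
  (forall a, mul (inv a) a = e) /\ (forall a, mul a (inv a) = e).

Definition is_subsemigroup_unit (Q : Type) (mul : Q -> Q -> Q) (e : Q) (P : Q -> Prop) : Prop :=
  (forall m n, P m -> P n -> P (mul m n)) /\ P e.

(* A right partial action of P on X: dom x m means (x,m) ∈ X*P, act x m = x·m
   (act is only meaningful on dom). *)
Definition partial_action (Q X : Type) (mul : Q -> Q -> Q) (e : Q) (P : Q -> Prop)
  (dom : X -> Q -> Prop) (act : X -> Q -> X) : Prop :=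
  (forall x m, dom x m -> P m) /\
  (forall x, dom x e /\ act x e = x) /\
  (forall x m n, P m -> P n ->
     (dom x (mul m n) <-> (dom x m /\ dom (act x m) n))) /\
  (forall x m n, P m -> P n -> dom x (mul m n) ->
     act (act x m) n = act x (mul m n)).

Definition ple (Q : Type) (mul : Q -> Q -> Q) (P : Q -> Prop) (m n : Q) : Prop :=
  exists p, P p /\ n = mul m p.

Definition directed_action (Q X : Type) (mul : Q -> Q -> Q) (P : Q -> Prop)
  (dom : X -> Q -> Prop) : Prop :=
  forall m n, P m -> P n -> (exists x, dom x m /\ dom x n) ->
    exists r, P r /\ ple mul P m r /\ ple mul P n r /\
      (forall x, (dom x m /\ dom x n) <-> dom x r).

Definition G_XPT (Q X : Type) (mul : Q -> Q -> Q) (inv : Q -> Q) (P : Q -> Prop)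
  (dom : X -> Q -> Prop) (act : X -> Q -> X) (g : X * Q * X) : Prop :=
  let '(x, q, y) := g in
  exists m n, P m /\ P n /\ q = mul m (inv n) /\ dom x m /\ dom y n /\
    act x m = act y n.

Definition subgroupoid (Q X : Type) (mul : Q -> Q -> Q) (inv : Q -> Q)
  (S : X * Q * X -> Prop) : Prop :=
  (forall x q y q' z, S (x, q, y) -> S (y, q', z) -> S (x, mul q q', z)) /\
  (forall x q y, S (x, q, y) -> S (y, inv q, x)).


Set Implicit Arguments.
Unset Strict Implicit.

(* If [x·m = y·n] and [y·m' = z·n'], directedness applied to [y ∈ U(n) ∩ U(m')]
   yields [r = n a = m' b] with [y ∈ U(r)]; then [(m a, n' b)] witnesses the
   product, since [x·(m a) = (y·n)·a = y·r = (y·m')·b = z·(n' b)] and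
   [m n^{-1} m' n'^{-1} = m a (n' b)^{-1}] because [n^{-1} m' = a b^{-1}]. *)

Section GroupFacts.

Variables (Q : Type) (mul : Q -> Q -> Q) (inv : Q -> Q) (e : Q).
Hypothesis group : is_group mul inv e.

Lemma inv_involutive (a : Q) : inv (inv a) = a.
Proof.
  destruct group as [ass [el [er [il _]]]].
  rewrite <- (er (inv (inv a))), <- (il a), ass, il, el. reflexivity.
Qed.

Lemma inv_mul (a b : Q) : inv (mul a b) = mul (inv b) (inv a).
Proof.
  destruct group as [ass [el [er [il ir]]]].
  assert (left_inverse : mul (mul (inv b) (inv a)) (mul a b) = e).
  { rewrite <- ass, (ass (inv a)), il, el, il. reflexivity. }
  transitivity (mul (mul (mul (inv b) (inv a)) (mul a b)) (inv (mul a b))).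
  - rewrite left_inverse, el. reflexivity.
  - rewrite <- ass, ir, er. reflexivity.
Qed.

Lemma mul_inv_compose (m n m' n' a b : Q) :
  mul n a = mul m' b ->
  mul (mul m (inv n)) (mul m' (inv n')) = mul (mul m a) (inv (mul n' b)).
Proof.
  destruct group as [ass [el [er [il ir]]]].
  intro common_bound.
  assert (swap : mul (inv n) m' = mul a (inv b)).
  { transitivity (mul (mul (inv n) (mul m' b)) (inv b)).
    - rewrite <- !ass, ir, er. reflexivity.
    - rewrite <- common_bound, ass, il, el. reflexivity. }
  rewrite inv_mul, <- (ass m), (ass (inv n)), swap, <- ass, <- (ass m).
  reflexivity.
Qed.

End GroupFacts.

Section PartialActionFacts.

Variables (Q X : Type) (mul : Q -> Q -> Q) (e : Q) (P : Q -> Prop).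
Variables (dom : X -> Q -> Prop) (act : X -> Q -> X).
Hypothesis action : partial_action mul e P dom act.

Lemma dom_mul_act (x : X) (m a : Q) :
  P m -> P a -> dom x (mul m a) -> dom (act x m) a.
Proof.
  destruct action as [_ [_ [dom_mul _]]].
  intros Pm Pa xma. apply (dom_mul x m a Pm Pa). exact xma.
Qed.

Lemma dom_mul_of_act (x : X) (m a : Q) :
  P m -> P a -> dom x m -> dom (act x m) a -> dom x (mul m a).
Proof.
  destruct action as [_ [_ [dom_mul _]]].
  intros Pm Pa xm xma. apply (dom_mul x m a Pm Pa). split; assumption.
Qed.

Lemma act_mul (x : X) (m a : Q) :
  P m -> P a -> dom x (mul m a) -> act x (mul m a) = act (act x m) a.
Proof.
  destruct action as [_ [_ [_ act_assoc]]].
  intros Pm Pa xma. symmetry. exact (act_assoc x m a Pm Pa xma).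
Qed.

End PartialActionFacts.

Section GroupoidOfAction.

Variables (Q X : Type) (mul : Q -> Q -> Q) (inv : Q -> Q) (e : Q).
Variables (P : Q -> Prop) (dom : X -> Q -> Prop) (act : X -> Q -> X).
Hypothesis group : is_group mul inv e.
Hypothesis semigroup : is_subsemigroup_unit mul e P.
Hypothesis action : partial_action mul e P dom act.
Hypothesis directed : directed_action mul P dom.

Let G := G_XPT mul inv P dom act.

Lemma G_XPT_inv (x : X) (q : Q) (y : X) : G (x, q, y) -> G (y, inv q, x).
Proof.
  intros [m [n [Pm [Pn [-> [xm [yn xm_yn]]]]]]].
  exists n, m. repeat split; auto.
  rewrite (inv_mul group), (inv_involutive group). reflexivity.
Qed.

Lemma G_XPT_mul (x : X) (q : Q) (y : X) (q' : Q) (z : X) :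
  G (x, q, y) -> G (y, q', z) -> G (x, mul q q', z).
Proof.
  destruct semigroup as [P_mul _].
  intros [m [n [Pm [Pn [-> [xm [yn xm_yn]]]]]]]
         [m' [n' [Pm' [Pn' [-> [ym' [zn' ym'_zn']]]]]]].
  destruct (directed Pn Pm' (ex_intro _ y (conj yn ym')))
    as [r [Pr [[a [Pa ->]] [[b [Pb r_eq]] U_r]]]].
  assert (yna : dom y (mul n a)) by (apply U_r; auto).
  assert (ym'b : dom y (mul m' b)) by (rewrite <- r_eq; exact yna).
  assert (xma : dom x (mul m a)).
  { apply (dom_mul_of_act action); auto.
    rewrite xm_yn. exact (dom_mul_act action Pn Pa yna). }
  assert (zn'b : dom z (mul n' b)).
  { apply (dom_mul_of_act action); auto.
    rewrite <- ym'_zn'. exact (dom_mul_act action Pm' Pb ym'b). }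
  exists (mul m a), (mul n' b).
  repeat split; auto.
  - exact (mul_inv_compose group m n' r_eq).
  - rewrite (act_mul action Pm Pa xma), (act_mul action Pn' Pb zn'b),
      xm_yn, <- ym'_zn', <- (act_mul action Pn Pa yna),
      <- (act_mul action Pm' Pb ym'b), r_eq.
    reflexivity.
Qed.

End GroupoidOfAction.

Theorem lemma5p5 (Q X : Type) (mul : Q -> Q -> Q) (inv : Q -> Q) (e : Q)
  (P : Q -> Prop) (dom : X -> Q -> Prop) (act : X -> Q -> X) :
  is_group mul inv e ->
  is_subsemigroup_unit mul e P ->
  partial_action mul e P dom act ->
  directed_action mul P dom ->
  subgroupoid mul inv (G_XPT mul inv P dom act).
Proof.
  intros group semigroup action directed. split.
  - exact (G_XPT_mul group semigroup action directed).
  - exact (G_XPT_inv group).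
Qed.
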